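(* Let $(A,E)$ be the direct producted noncommutative probability space over $D_N$ of noncommutative probability spaces $(A_1,\varphi_1),\dots,(A_N,\varphi_N)$. Let $i\neq j$ in $\{1,\dots,N\}$, $a_i\in A_i$, $a_j\in A_j$, and let $e_i\in A$ be the tuple with $a_i$ in the $i$-th coordinate and $0$ elsewhere, and $e_j\in A$ the tuple with $a_j$ in the $j$-th coordinate and $0$ elsewhere. Then $e_i$ and $e_j$ are free over $D_N$ in $(A,E)$.
   Context: Each $(A_j,\varphi_j)$ is a unital complex algebra with a linear functional. $A=\times_{j=1}^N A_j$ with componentwise operations; $D_N=\mathbb{C}^N$ with componentwise operations, identified with the central subalgebra $\{(\alpha_1 1,\dots,\alpha_N 1)\}$ of $A$; $E((a_1,\dots,a_N))=(\varphi_1(a_1),\dots,\varphi_N(a_N))$. $D_N$-valued cumulants: $k_n(y_1,\dots,y_n)=\sum_{\pi\in NC(n)}\prod_{V\in\pi}E(\prod_{l\in V}y_l)\,\mu(\pi,1_n)$. Elements are free over $D_N$ if all mixed $D_N$-valued cumulants of elements of the algebras they generate together with $D_N$ vanish. *)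

From HB Require Import structures.
From mathcomp Require Import all_boot all_order all_algebra.
From mathcomp Require Import reals.
From mathcomp Require Import complex.
Set Implicit Arguments. Unset Strict Implicit. Unset Printing Implicit Defensive.
Import Order.TTheory GRing.Theory Num.Theory.
Local Open Scope ring_scope.

Notation Cx R := (complex R).

Definition is_partition (n : nat) (p : {set {set 'I_n}}) : bool :=
  partition p [set: 'I_n].

Definition noncrossing (n : nat) (p : {set {set 'I_n}}) : bool :=
  [forall V in p, forall W in p, (V != W) ==>
     [forall a : 'I_n, forall b : 'I_n, forall c : 'I_n, forall d : 'I_n,
        ~~ [&& (a < b)%N, (b < c)%N, (c < d)%N,
               a \in V, c \in V, b \in W & d \in W]]].

Definition is_NC (n : nat) (p : {set {set 'I_n}}) : bool :=
  is_partition p && noncrossing p.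

Definition refines (n : nat) (p q : {set {set 'I_n}}) : bool :=
  [forall V in p, exists W in q, V \subset W].

Definition one_part (n : nat) : {set {set 'I_n}} := [set [set: 'I_n]].

Fixpoint mob_rec (K : pzRingType) (T : finType) (S : {pred T}) (le : rel T)
    (f : nat) (x y : T) : K :=
  match f with
  | 0 => 0
  | f'.+1 =>
      if x == y then 1
      else if le x y then
        - \sum_(z in S | le x z && le z y && (z != y)) @mob_rec K T S le f' x z
      else 0
  end.

Definition moebius (K : pzRingType) (T : finType) (S : {pred T}) (le : rel T)
    (x y : T) : K := @mob_rec K T S le #|S|.+1 x y.

Definition mu_NC (K : pzRingType) (n : nat) (p q : {set {set 'I_n}}) : K :=
  @moebius K _ (@is_NC n) (@refines n) p q.

Section DirectProduct.
Variables (R : realType) (N : nat) (A : 'I_N -> algType (Cx R)).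

Definition prodA := forall k : 'I_N, A k.
Definition DN := 'I_N -> Cx R.

Definition padd (x y : prodA) : prodA := fun k => x k + y k.
Definition pmul (x y : prodA) : prodA := fun k => x k * y k.
Definition dconst (al : DN) : prodA := fun k => al k *: (1 : A k).

Definition single (i : 'I_N) (a : A i) : prodA :=
  fun k => match i =P k with
           | ReflectT e => eq_rect i (fun j => (A j : Type)) a k e
           | ReflectF _ => 0
           end.

Definition Econd (phi : forall k, A k -> Cx R) (x : prodA) : DN :=
  fun k => phi k (x k).

Definition block_prod (n : nat) (V : {set 'I_n}) (y : 'I_n -> prodA) : prodA :=
  fun k => \prod_(l < n | l \in V) y l k.

Definition cumulant (phi : forall k, A k -> Cx R) (n : nat) (y : 'I_n -> prodA)
  : DN :=
  fun k => \sum_(p : {set {set 'I_n}} | is_NC p)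
             (\prod_(V in p) Econd phi (block_prod V y) k) * @mu_NC (Cx R) n p (one_part n).

Inductive gen_with_D (x : prodA) : prodA -> Prop :=
  | gen_x : gen_with_D x x
  | gen_D al : gen_with_D x (dconst al)
  | gen_add u v : gen_with_D x u -> gen_with_D x v -> gen_with_D x (padd u v)
  | gen_mul u v : gen_with_D x u -> gen_with_D x v -> gen_with_D x (pmul u v).

Definition free_over_DN (phi : forall k, A k -> Cx R) (x1 x2 : prodA) : Prop :=
  forall (n : nat) (iota : 'I_n -> bool) (y : 'I_n -> prodA),
    (exists l, iota l) -> (exists l, ~~ iota l) ->
    (forall l, gen_with_D (if iota l then x1 else x2) (y l)) ->
    cumulant phi y = (fun _ => 0).

End DirectProduct.

From HB Require Import structures.
From mathcomp Require Import all_boot all_order all_algebra.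
From mathcomp Require Import reals.
From mathcomp Require Import complex.
From Stdlib Require Import FunctionalExtensionality.
Import GRing.Theory.
Local Open Scope ring_scope.

(* Since i != j, every coordinate k differs from i or from j, so at coordinate
   k one of the two generated algebras consists of scalar multiples of 1.
   The k-th component of a mixed cumulant is therefore a scalar-valued free
   cumulant of (A_k, phi_k) having a scalar entry y_l0 = c 1, and such
   cumulants vanish for n >= 2.  For the latter, the moment functional
   p |-> prod_(V in p) phi_k(prod_(l in V) y_l) does not change when l0 is
   split off into a singleton block; this splitting is an interior operator on
   NC(n) that moves 1_n, so Crapo's closure lemma kills the Moebius sum. *)

Set Implicit Arguments. Unset Strict Implicit. Unset Printing Implicit Defensive.

Lemma sum_kronecker_l (K : pzSemiRingType) (T : finType) (x : T) (F : T -> K) :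
  \sum_z (x == z)%:R * F z = F x.
Proof.
rewrite (bigD1 x) //= eqxx mul1r big1 ?addr0 // => z nzx.
by rewrite eq_sym (negbTE nzx) mul0r.
Qed.

Lemma sum_kronecker_r (K : pzSemiRingType) (T : finType) (y : T) (F : T -> K) :
  \sum_z F z * (z == y)%:R = F y.
Proof.
rewrite (bigD1 y) //= eqxx mulr1 big1 ?addr0 // => z nzy.
by rewrite (negbTE nzy) mulr0.
Qed.

Section Moebius.
Variables (K : comPzRingType) (T : finType) (S : {pred T}) (le : rel T).
Hypothesis le_refl : forall x, le x x.
Hypothesis le_trans : forall x y z, le x y -> le y z -> le x z.
Hypothesis le_anti : forall x y, x \in S -> y \in S -> le x y -> le y x -> x = y.

Local Notation mu := (@moebius K T S le).

Definition itv_card (x y : T) : nat := #|[pred w in S | le x w && le w y]|.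

Lemma itv_card_lt x y z : z \in S -> y \in S -> le x y -> le z y -> z != y ->
  (itv_card x z < itv_card x y)%N.
Proof.
move=> zS yS xy zy nzy; apply: proper_card; apply/properP; split.
  apply/subsetP => w; rewrite !inE => /andP[-> /andP[-> wz]] /=.
  exact: le_trans wz zy.
exists y; first by rewrite !inE yS xy le_refl.
rewrite !inE yS /=; apply: contra nzy => /andP[_ yz].
by apply/eqP; apply: le_anti.
Qed.

Lemma itv_card_le x y : (itv_card x y <= #|S|)%N.
Proof. by apply: subset_leq_card; apply/subsetP => w; rewrite !inE => /andP[]. Qed.

Lemma mob_rec_fuel f g x y : y \in S ->
  (itv_card x y < f)%N -> (itv_card x y < g)%N ->
  @mob_rec K T S le f x y = @mob_rec K T S le g x y.
Proof.
elim: f g y => [|f IH] [|g] y yS //= hf hg.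
case: eqP => // _; case xy: (le x y) => //; congr (- _).
apply: eq_bigr => z /andP[zS /andP[/andP[xz zy] nzy]].
have lt_zy := itv_card_lt zS yS xy zy nzy.
by apply: IH => //; apply: leq_trans lt_zy _.
Qed.

Lemma moebius_id x : mu x x = 1.
Proof. by rewrite /moebius /= eqxx. Qed.

Lemma moebius_eq0 x y : x != y -> ~~ le x y -> mu x y = 0.
Proof. by rewrite /moebius /= => /negbTE -> /negbTE ->. Qed.

Lemma sum_moebius_left x y : x \in S -> y \in S -> le x y ->
  \sum_(z in S | le x z && le z y) mu x z = (x == y)%:R.
Proof.
move=> xS yS xy; have [<-|nxy] := eqVneq x y.
  rewrite (big_pred1 x) ?moebius_id // => z; rewrite !inE.
  apply/idP/eqP => [/andP[zS /andP[xz zx]]|->]; last by rewrite xS le_refl.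
  exact: le_anti.
rewrite (bigD1 y) /=; last by rewrite yS xy le_refl.
rewrite {1}/moebius /= (negbTE nxy) xy addrC; apply/eqP; rewrite subr_eq0.
apply/eqP; apply: eq_big => [z|z /andP[/and3P[zS xz zy] nzy]]; first by rewrite !andbA.
have lt_zy := itv_card_lt zS yS xy zy nzy.
rewrite /moebius; apply: mob_rec_fuel => //.
  by apply: leq_trans lt_zy _; apply: leq_trans (itv_card_le x y) _.
by apply: leq_trans lt_zy _; apply: itv_card_le.
Qed.

(* The zeta and Moebius functions of S, extended by the identity outside S,
   are square matrices indexed by T; the left-inverse relation then yields
   the right-inverse one. *)
Definition zeta_ext x y : K :=
  if (x \in S) && (y \in S) then (le x y)%:R else (x == y)%:R.

Definition moebius_ext x y : K :=
  if (x \in S) && (y \in S) then mu x y else (x == y)%:R.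

Lemma moebius_ext_zeta x y : \sum_z moebius_ext x z * zeta_ext z y = (x == y)%:R.
Proof.
case xS: (x \in S); last first.
  have -> : (x == y)%:R = zeta_ext x y by rewrite /zeta_ext xS.
  rewrite -(sum_kronecker_l x (zeta_ext^~ y)).
  by apply: eq_bigr => z _; rewrite /moebius_ext xS.
case yS: (y \in S); last first.
  have -> : (x == y)%:R = moebius_ext x y by rewrite /moebius_ext yS andbF.
  rewrite -(sum_kronecker_r y (moebius_ext x)).
  by apply: eq_bigr => z _; rewrite /zeta_ext yS andbF.
rewrite (bigID (mem S)) /= [X in _ + X]big1 ?addr0; last first.
  move=> z /negbTE zS; rewrite /moebius_ext zS andbF.
  by case: eqP => [exz|]; [rewrite exz zS in xS|rewrite mul0r].
transitivity (\sum_(z in S | le x z && le z y) mu x z); last first.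
  case xy: (le x y); first exact: sum_moebius_left.
  rewrite big_pred0; last first.
    by move=> z; apply/negP => /and3P[_ xz zy]; rewrite (le_trans xz zy) in xy.
  by case: eqP => // exy; rewrite exy le_refl in xy.
rewrite big_mkcondr; apply: eq_bigr => z zS; rewrite /moebius_ext /zeta_ext xS zS yS.
case: (le z y); case xz: (le x z); rewrite ?mulr1 ?mulr0 //= moebius_eq0 ?xz //.
by apply: contraFneq xz => ->.
Qed.

Lemma zeta_moebius_ext x y : \sum_z zeta_ext x z * moebius_ext z y = (x == y)%:R.
Proof.
pose M := \matrix_(a, b) moebius_ext (enum_val a) (enum_val b) : 'M[K]_#|T|.
pose Z := \matrix_(a, b) zeta_ext (enum_val a) (enum_val b) : 'M[K]_#|T|.
have MZ : M *m Z = 1%:M.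
  apply/matrixP => a b; rewrite !mxE; under eq_bigr do rewrite !mxE.
  rewrite -(big_enum_val (fun z => moebius_ext (enum_val a) z * zeta_ext z (enum_val b))).
  by rewrite moebius_ext_zeta (inj_eq enum_val_inj).
have /matrixP/(_ (enum_rank x) (enum_rank y)) := mulmx1C MZ.
rewrite !mxE; under eq_bigr do rewrite !mxE.
rewrite -(big_enum_val (fun z => zeta_ext (enum_val (enum_rank x)) z
                                 * moebius_ext z (enum_val (enum_rank y)))).
by rewrite !enum_rankK (inj_eq enum_rank_inj).
Qed.

Lemma sum_moebius_right x y : x \in S -> y \in S ->
  \sum_(z in S | le x z) mu z y = (x == y)%:R.
Proof.
move=> xS yS; rewrite -zeta_moebius_ext [RHS](bigID (mem S)) /=.
rewrite [X in _ + X]big1 ?addr0; last first.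
  move=> z /negbTE zS; rewrite /zeta_ext zS andbF.
  by case: eqP => [exz|]; [rewrite -exz xS in zS|rewrite mul0r].
rewrite big_mkcondr; apply: eq_bigr => z zS.
by rewrite /zeta_ext /moebius_ext xS zS yS /=; case: (le x z); rewrite ?mul1r ?mul0r.
Qed.

Section InteriorOperator.
Variable c : T -> T.
Hypothesis c_in : forall x, x \in S -> c x \in S.
Hypothesis c_le : forall x, x \in S -> le (c x) x.
Hypothesis c_mono : forall x z, x \in S -> z \in S -> le x z -> le (c x) (c z).
Hypothesis c_idem : forall x, x \in S -> c (c x) = c x.

(* By descending induction on the fixed point s, using that the fibres of c
   above s partition the up-set of s. *)
Lemma sum_moebius_fibre_eq0 y s : y \in S -> c y != y -> s \in S -> c s = s ->
  \sum_(x in S | c x == s) mu x y = 0.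
Proof.
move=> yS cy; have [k] := ubnP #|[pred u in S | le s u]|.
elim: k s => // k IH s hk sS cs.
have sy : s != y by apply: contraNneq cy => <-; rewrite cs.
have := sum_moebius_right sS yS; rewrite (negbTE sy) mulr0n.
rewrite (partition_big c (fun t => [&& t \in S, c t == t & le s t])) /=; last first.
  by move=> z /andP[zS sz]; rewrite c_in // c_idem // eqxx -cs c_mono.
rewrite (bigD1 s) /=; last by rewrite sS cs eqxx le_refl.
rewrite [X in _ + X]big1 ?addr0; last first.
  move=> t /andP[/and3P[tS /eqP ct st] nts].
  rewrite -[RHS](IH t) //; last first.
    rewrite ltnS in hk; apply: leq_trans hk; apply: proper_card; apply/properP; split.
      by apply/subsetP => u; rewrite !inE => /andP[-> tu]; rewrite (le_trans st tu).
    exists s; first by rewrite !inE sS le_refl.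
    rewrite !inE sS /=; apply: contra nts => ts.
    by apply/eqP; apply: le_anti.
  apply: eq_bigl => z; apply/andP/andP => [[/andP[zS _] czt]|[zS /eqP czt]] //.
  by rewrite zS czt eqxx (le_trans st) // -czt c_le.
move=> E; rewrite -[RHS]E; apply: eq_bigl => z.
apply/andP/andP => [[zS /eqP czs]|[/andP[zS _] czs]] //.
by rewrite zS czs eqxx -czs c_le.
Qed.

(* Crapo's closure lemma, for an interior operator. *)
Lemma sum_invariant_moebius_eq0 y (f : T -> K) : y \in S -> c y != y ->
  (forall x, x \in S -> f x = f (c x)) ->
  \sum_(x in S) f x * mu x y = 0.
Proof.
move=> yS cy fc; under eq_bigr => x xS do rewrite fc //.
rewrite (partition_big c (fun t => (t \in S) && (c t == t))) /=; last first.
  by move=> z zS; rewrite c_in // c_idem // eqxx.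
apply: big1 => t /andP[tS /eqP ct].
under eq_bigr => x /andP[_ /eqP ->] do [].
by rewrite -mulr_sumr sum_moebius_fibre_eq0 // mulr0.
Qed.

End InteriorOperator.
End Moebius.

Section NoncrossingPartitions.
Variable n : nat.
Implicit Types (p q : {set {set 'I_n}}) (U V W : {set 'I_n}).

Lemma refinesP p q :
  reflect (forall V, V \in p -> exists2 W, W \in q & V \subset W) (refines p q).
Proof.
apply: (iffP forallP) => [H V Vp|H V].
  by move: (H V); rewrite Vp /= => /existsP[W /andP[Wq VW]]; exists W.
apply/implyP => /H[W Wq VW]; apply/existsP; exists W; by rewrite Wq VW.
Qed.

Lemma refines_refl p : refines p p.
Proof. by apply/refinesP => V Vp; exists V. Qed.

Lemma refines_trans p q r : refines p q -> refines q r -> refines p r.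
Proof.
move=> /refinesP pq /refinesP qr; apply/refinesP => V /pq [W /qr [X Xr WX] VW].
by exists X => //; apply: subset_trans VW WX.
Qed.

Lemma partition_block_eq p V W x : is_partition p -> V \in p -> W \in p ->
  x \in V -> x \in W -> V = W.
Proof.
move=> /and3P[_ tp _] Vp Wp xV xW.
by rewrite -(def_pblock tp Vp xV) (def_pblock tp Wp xW).
Qed.

Lemma partition_pblock p x : is_partition p -> x \in pblock p x /\ pblock p x \in p.
Proof. by move=> /and3P[/eqP cp _ _]; rewrite mem_pblock pblock_mem ?cp ?inE. Qed.

Lemma partition_block_nonempty p V : is_partition p -> V \in p -> exists x, x \in V.
Proof.
move=> /and3P[_ _ p0] Vp; apply/set0Pn; apply: contraNneq p0 => V0.
by rewrite -V0.
Qed.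

Lemma refines_anti p q : is_partition p -> is_partition q ->
  refines p q -> refines q p -> p = q.
Proof.
have sub p' q' : is_partition p' -> refines p' q' -> refines q' p' -> p' \subset q'.
  move=> pp' /refinesP pq /refinesP qp; apply/subsetP => V Vp.
  have [W Wq VW] := pq V Vp; have [X Xp WX] := qp W Wq.
  have [x xV] := partition_block_nonempty pp' Vp.
  have VX : V = X by apply: partition_block_eq pp' Vp Xp xV (subsetP WX _ (subsetP VW _ xV)).
  suff -> : V = W by [].
  by apply/eqP; rewrite eqEsubset VW VX.
by move=> pp pq hpq hqp; apply/eqP; rewrite eqEsubset !sub.
Qed.

Lemma one_part_NC : (0 < n)%N -> is_NC (one_part n).
Proof.
move=> n0; apply/andP; split.
  apply/and3P; split; rewrite /one_part ?cover1 ?trivIset1 //.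
  rewrite in_set1; apply/negP => /eqP/setP/(_ (Ordinal n0)).
  by rewrite !inE.
apply/forallP => V; apply/implyP => /set1P ->.
by apply/forallP => W; apply/implyP => /set1P ->; rewrite eqxx.
Qed.

Lemma noncrossingP p V W (a b c d : 'I_n) : noncrossing p ->
  V \in p -> W \in p -> V != W -> (a < b < c)%N -> (c < d)%N ->
  a \in V -> c \in V -> b \in W -> d \in W -> False.
Proof.
move=> /forallP/(_ V) + Vp Wp nVW /andP[ab bc] cd aV cV bW dW.
rewrite Vp => /forallP/(_ W); rewrite Wp nVW.
move=> /forallP/(_ a)/forallP/(_ b)/forallP/(_ c)/forallP/(_ d).
by rewrite ab bc cd aV cV bW dW.
Qed.

Variable l0 : 'I_n.

Definition isolate p : {set {set 'I_n}} :=
  [set l0] |: (((fun V => V :\ l0) @: p) :\ set0).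

Lemma in_isolate U p : (U \in isolate p) =
  (U == [set l0]) || ((U != set0) && (U \in (fun V => V :\ l0) @: p)).
Proof. by rewrite in_setU1 in_setD1. Qed.

Lemma isolateP U p : U \in isolate p -> U = [set l0] \/ exists2 V, V \in p & U = V :\ l0.
Proof. by rewrite in_isolate => /orP[/eqP->|/andP[_ /imsetP[V Vp ->]]]; [left|right; exists V]. Qed.

Lemma set1_isolate p : [set l0] \in isolate p.
Proof. by rewrite in_isolate eqxx. Qed.

Lemma setD1_isolate V p : V \in p -> V :\ l0 != set0 -> V :\ l0 \in isolate p.
Proof. by move=> Vp nV; rewrite in_isolate nV (imset_f (fun V => V :\ l0)) ?orbT. Qed.

Lemma isolate_partition p : is_partition p -> is_partition (isolate p).
Proof.
move=> pp; apply/and3P; split.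
- apply/eqP/setP => x; rewrite inE; apply/bigcupP.
  have [->|nx] := eqVneq x l0; first by exists [set l0]; rewrite ?set1_isolate ?set11.
  have [xV Vp] := partition_pblock x pp.
  have xV' : x \in pblock p x :\ l0 by rewrite in_setD1 nx xV.
  by exists (pblock p x :\ l0); rewrite ?setD1_isolate //; apply/set0Pn; exists x.
- apply/trivIsetP => U1 U2 /isolateP h1 /isolateP h2 nU12.
  rewrite -setI_eq0; apply/eqP/setP => x; rewrite !inE.
  case: h1 h2 nU12 => [->|[V Vp ->]] [->|[W Wp ->]]; rewrite ?eqxx // => nU12.
  + by rewrite !inE; case: eqP => // ->; rewrite eqxx ?andbF.
  + by rewrite !inE andbC andbA andbN.
  + rewrite !inE; apply: contraNF nU12 => /andP[/andP[_ xV] /andP[_ xW]].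
    by rewrite (partition_block_eq pp Vp Wp xV xW).
- rewrite in_isolate eqxx /= orbF; apply/negP => /eqP/setP/(_ l0).
  by rewrite in_set0 set11.
Qed.

Lemma isolate_NC p : is_NC p -> is_NC (isolate p).
Proof.
move=> /andP[pp ncp]; rewrite /is_NC isolate_partition //=.
apply/forallP => U1; apply/implyP => /isolateP h1.
apply/forallP => U2; apply/implyP => /isolateP h2; apply/implyP => nU12.
apply/forallP => a; apply/forallP => b; apply/forallP => c; apply/forallP => d.
apply/negP => /and5P[ab bc cd aU1 /and3P[cU1 bU2 dU2]].
case: h1 aU1 cU1 nU12 => [->|[V Vp ->]].
  by rewrite !in_set1 => /eqP ea /eqP ec; move: (ltn_trans ab bc); rewrite ea ec ltnn.
case: h2 bU2 dU2 => [->|[W Wp ->]].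
  by rewrite !in_set1 => /eqP eb /eqP ed; move: (ltn_trans bc cd); rewrite eb ed ltnn.
rewrite !in_setD1 => /andP[_ bW] /andP[_ dW] /andP[_ aV] /andP[_ cV] nVW.
have {}nVW : V != W by apply: contraNneq nVW => ->.
by apply: (noncrossingP ncp Vp Wp nVW _ cd aV cV bW dW); rewrite ab bc.
Qed.

Lemma isolate_refines p : is_partition p -> refines (isolate p) p.
Proof.
move=> pp; apply/refinesP => U /isolateP[->|[V Vp ->]]; last by exists V; rewrite ?subsetDl.
have [l0V Vp] := partition_pblock l0 pp.
by exists (pblock p l0); rewrite ?sub1set.
Qed.

Lemma isolate_mono p q : refines p q -> refines (isolate p) (isolate q).
Proof.
move=> /refinesP pq; apply/refinesP => U /isolateP[->|[V Vp ->]].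
  by exists [set l0]; rewrite ?set1_isolate.
have [->|/set0Pn[x xV]] := eqVneq (V :\ l0) set0.
  by exists [set l0]; rewrite ?set1_isolate ?sub0set.
have [W Wq VW] := pq V Vp; have VW' : V :\ l0 \subset W :\ l0 by apply: setSD.
exists (W :\ l0) => //; apply: setD1_isolate => //.
by apply/set0Pn; exists x; apply: (subsetP VW').
Qed.

Lemma imset_setD1_isolate p U : U != set0 ->
  (U \in (fun V => V :\ l0) @: isolate p) = (U \in (fun V => V :\ l0) @: p).
Proof.
move=> nU; apply/imsetP/imsetP => [[V /isolateP[->|[W Wp ->]] eU]|[W Wp eU]].
- by rewrite eU setDv eqxx in nU.
- by exists W => //; rewrite eU setDDl setUid.
- exists (W :\ l0); last by rewrite setDDl setUid.
  by apply: setD1_isolate => //; rewrite -eU.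
Qed.

Lemma isolate_idem p : isolate (isolate p) = isolate p.
Proof.
apply/setP => U; rewrite !in_isolate.
by have [//|nU] := eqVneq U set0; rewrite imset_setD1_isolate.
Qed.

Lemma isolate_one_part : (1 < n)%N -> isolate (one_part n) != one_part n.
Proof.
move=> n1; have [x nx] : exists x : 'I_n, x != l0.
  have [e|] := eqVneq (Ordinal (ltnW n1)) l0; last by exists (Ordinal (ltnW n1)).
  by exists (Ordinal n1); rewrite -e.
apply/eqP => e; have := set1_isolate (one_part n).
by rewrite e in_set1 => /eqP/setP/(_ x); rewrite !inE (negbTE nx).
Qed.

Lemma setD1_block_inj p : is_partition p -> {in p &, injective (fun V => V :\ l0)}.
Proof.
have l0_in V : is_partition p -> V \in p -> V :\ l0 = set0 -> l0 \in V.
  move=> pp Vp V0; have [x xV] := partition_block_nonempty pp Vp.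
  have [<-//|nx] := eqVneq x l0.
  have : x \in V :\ l0 by rewrite in_setD1 nx xV.
  by rewrite V0 in_set0.
move=> pp V W Vp Wp /= e.
have [V0|/set0Pn[x]] := eqVneq (V :\ l0) set0.
  by apply: (partition_block_eq pp Vp Wp); apply: l0_in; rewrite -?e.
move=> xV'; have xW' : x \in W :\ l0 by rewrite -e.
move: xV' xW'; rewrite !in_setD1 => /andP[_ xV] /andP[_ xW].
exact: partition_block_eq pp Vp Wp xV xW.
Qed.

End NoncrossingPartitions.

Section ScalarEntry.
Variables (K : comPzRingType) (B : algType K) (phi : B -> K).
Hypothesis phi_lin : forall (c : K) (a b : B), phi (c *: a + b) = c * phi a + phi b.
Hypothesis phi_unit : phi 1 = 1.

Lemma phi0 : phi 0 = 0.
Proof.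
have := phi_lin 1 0 0; rewrite scale1r addr0 mul1r -{1}[phi 0]addr0.
by move/addrI.
Qed.

Lemma phiZ c a : phi (c *: a) = c * phi a.
Proof. by rewrite -[c *: a]addr0 phi_lin phi0 addr0. Qed.

Variables (n : nat) (l0 : 'I_n) (y : 'I_n -> B) (c : K).
Hypothesis y_l0 : y l0 = c *: 1.

Definition block_moment (U : {set 'I_n}) : K := phi (\prod_(l < n | l \in U) y l).

Definition moment_product (p : {set {set 'I_n}}) : K :=
  \prod_(V in p) block_moment V.

Lemma block_moment_set0 : block_moment set0 = 1.
Proof. by rewrite /block_moment big_pred0 ?phi_unit // => l; rewrite in_set0. Qed.

Lemma prod_scalar_entry (U : {set 'I_n}) : \prod_(l < n | l \in U) y l =
  (if l0 \in U then c else 1) *: \prod_(l < n | l \in U :\ l0) y l.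
Proof.
rewrite (eq_bigr (fun l => (if l == l0 then c else 1) *: (if l == l0 then 1 else y l)));
  last by move=> l _; case: eqP => [->|_]; rewrite ?y_l0 ?scale1r.
rewrite scaler_prod; congr (_ *: _).
  case: (boolP (l0 \in U)) => l0U.
    by rewrite (bigD1 l0) //= eqxx big1 ?mulr1 // => l /andP[_ /negbTE ->].
  by apply: big1 => l lU; case: eqP => // el; rewrite -el lU in l0U.
rewrite [LHS]big_mkcond [RHS]big_mkcond; apply: eq_bigr => l _.
by rewrite in_setD1; have [->|/negbTE nl] := eqVneq l l0; rewrite ?eqxx ?nl ?if_same.
Qed.

Lemma block_momentE (U : {set 'I_n}) :
  block_moment U = (if l0 \in U then c else 1) * block_moment (U :\ l0).
Proof. by rewrite /block_moment prod_scalar_entry phiZ. Qed.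

Lemma moment_productE p : is_partition p ->
  moment_product p =
    c * \prod_(U in (fun V => V :\ l0) @: p | U != set0) block_moment U.
Proof.
move=> pp; rewrite /moment_product (eq_bigr _ (fun V _ => block_momentE V)).
rewrite big_split /=; congr (_ * _).
  have [l0V Vp] := partition_pblock l0 pp.
  rewrite (bigD1 (pblock p l0)) //= l0V big1 ?mulr1 // => V /andP[Vp' nV].
  case: ifP => // l0V'; case/eqP: nV; exact: partition_block_eq pp Vp' Vp l0V' l0V.
rewrite -big_imset /=; last exact: setD1_block_inj.
rewrite [RHS]big_mkcondr; apply: eq_bigr => U _.
by case: eqP => [->|]; rewrite ?block_moment_set0.
Qed.

Lemma moment_product_isolate p : is_partition p ->
  moment_product (isolate l0 p) = moment_product p.
Proof.
move=> pp; rewrite !moment_productE ?isolate_partition //; congr (_ * _).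
by apply: eq_bigl => U; case: (eqVneq U set0) => [->|nU]; rewrite ?andbF ?imset_setD1_isolate.
Qed.

Lemma free_cumulant_scalar_eq0 : (1 < n)%N ->
  \sum_(p : {set {set 'I_n}} | is_NC p) moment_product p * mu_NC K p (one_part n) = 0.
Proof.
move=> n1; apply: (@sum_invariant_moebius_eq0 K _ _ _ (@refines_refl n)
  (@refines_trans n) _ (isolate l0)) => //.
- by move=> p q /andP[pp _] /andP[qp _]; apply: refines_anti.
- exact: isolate_NC.
- by move=> p /andP[pp _]; apply: isolate_refines.
- by move=> p q _ _; apply: isolate_mono.
- by move=> p _; apply: isolate_idem.
- exact/one_part_NC/ltnW.
- exact: isolate_one_part.
- by move=> p /andP[pp _]; rewrite moment_product_isolate.
Qed.

End ScalarEntry.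

Lemma ord_neq_gt1 n (a b : 'I_n) : a != b -> (1 < n)%N.
Proof. by case: n a b => [|[|n]] // a b; [case: a | rewrite !ord1 eqxx]. Qed.

Lemma gen_with_D_scalar (R : realType) (N : nat) (A : 'I_N -> algType (complex R))
    (x u : prodA A) (k : 'I_N) :
  x k = 0 -> gen_with_D x u -> exists c, u k = c *: 1.
Proof.
move=> xk; elim => [|al|v w _ [a va] _ [b wb]|v w _ [a va] _ [b wb]].
- by exists 0; rewrite xk scale0r.
- by exists (al k).
- by exists (a + b); rewrite /padd va wb scalerDl.
- by exists (a * b); rewrite /pmul va wb -scalerAl mul1r scalerA.
Qed.

Lemma single_neq (R : realType) (N : nat) (A : 'I_N -> algType (complex R))
    (i k : 'I_N) (a : A i) : i != k -> single a k = 0.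
Proof. by rewrite /single; case: eqP. Qed.

Unset Implicit Arguments. Set Strict Implicit. Set Printing Implicit Defensive.

Theorem mainTheorem4 (R : realType) (N : nat) (A : 'I_N -> algType (complex R))
    (phi : forall k : 'I_N, A k -> complex R)
    (phi_lin : forall (k : 'I_N) (c : complex R) (a b : A k),
        phi k (c *: a + b) = c * phi k a + phi k b)
    (phi_unit : forall k : 'I_N, phi k 1 = 1)
    (i j : 'I_N) (hij : i != j) (ai : A i) (aj : A j) :
  free_over_DN phi (single ai) (single aj).
Proof.
move=> n iota y [l1 iota_l1] [l2 iota_l2] y_gen.
have n_gt1 : (1 < n)%N.
  by apply: (@ord_neq_gt1 _ l1 l2); apply: contraTneq iota_l1 => ->.
apply: functional_extensionality => k.
have [l0 [c y_l0]] : exists l0 c, y l0 k = c *: 1.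
  have [ki|nik] := eqVneq k i.
    exists l2; have := y_gen l2; rewrite (negbTE iota_l2).
    by apply: gen_with_D_scalar; apply: single_neq; rewrite ki eq_sym.
  exists l1; have := y_gen l1; rewrite iota_l1.
  by apply: gen_with_D_scalar; apply: single_neq; rewrite eq_sym.
exact: (free_cumulant_scalar_eq0 (phi_lin k) (phi_unit k) (y := fun l => y l k) y_l0 n_gt1).
Qed.
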